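(* There is an absolute constant $c>0$ such that for all integers $n,n_1,n_2,n_3$ with $n=n_1+n_2+n_3$ and $\tilde m_1(n,n_1,n_2,n_3)\neq0$ one has $$|\Phi|\ge \begin{cases} c\,|n_1+n_2|\,|n_2+n_3| & \text{if } |n_2|\ge |n_3|,\\ c\,|n_1+n_3|\,|n_2+n_3| &\text{if } |n_2|<|n_3|,\end{cases}$$ where $\Phi=n|n|-n_1|n_1|-n_2|n_2|-n_3|n_3|$. In particular $\Phi\ne0$ whenever $\tilde m_1\neq 0$.
   Context: Write $n_{ij\ldots}=n_i+n_j+\cdots$ and $\hat n:=n-i\mathbf 1_{\{n=0\}}$. For integers with $n=n_{123}$, $m_1(n,n_1,n_2,n_3):=2i\frac{n\,n_{23}}{\hat n_1\hat n_2}\mathbf 1_{\{n>0\}}\mathbf 1_{\{n_{23}<0\}}\mathbf 1_{\{n_3\neq0\}}$ and $\tilde m_1:=m_1\mathbf 1_{\{n_{12}n_{13}\neq0\}}$. *)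

(* m_1 is complex-valued; we use algC (algebraic complex numbers),
   which contains every value m_1 can take (rational multiples of i / Gaussian rationals). *)
From HB Require Import structures.
From mathcomp Require Import all_boot all_order all_algebra all_field.
Set Implicit Arguments. Unset Strict Implicit. Unset Printing Implicit Defensive.
Import Order.TTheory GRing.Theory Num.Theory.
Local Open Scope ring_scope.

Definition ind (b : bool) : algC := if b then 1 else 0.

Definition nhat (n : int) : algC := n%:~R - 'i * ind (n == 0).

Definition m1 (n n1 n2 n3 : int) : algC :=
  2 * 'i * (((n * (n2 + n3))%R : int)%:~R / (nhat n1 * nhat n2))
  * ind (0 < n) * ind (n2 + n3 < 0) * ind (n3 != 0).

Definition m1t (n n1 n2 n3 : int) : algC :=
  m1 n n1 n2 n3 * ind ((n1 + n2) * (n1 + n3) != 0).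

Definition Phi (n n1 n2 n3 : int) : int :=
  n * `|n| - n1 * `|n1| - n2 * `|n2| - n3 * `|n3|.

(* Under m1t != 0 we have n > 0 and n2 + n3 < 0, hence n1 > 0, and then only the
   signs of n2 and n3 matter.  If they differ, Phi factors exactly as
   2 (n1 + n_j) (n2 + n3), where n_j is the negative one (so |n_j| is the larger of
   |n2|, |n3|).  If both are negative, Phi = 2 (n (n2 + n3) - n2 n3) is a sum of two
   negative terms, and |n2 n3| >= |n_k| |n2 + n3| / 2 for n_k the smaller one
   supplies the missing |n_k| |n2 + n3| in |n1 + n_j| |n2 + n3| = (n + |n_k|) |n2 + n3|.
   So the bound holds with c = 1, and Phi != 0 because neither factor vanishes. *)
From HB Require Import structures.
From mathcomp Require Import all_boot all_order all_algebra all_field.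
From mathcomp Require Import zify ring.
Import Order.TTheory GRing.Theory Num.Theory.
Local Open Scope ring_scope.

Lemma m1t_neq0 n n1 n2 n3 : m1t n n1 n2 n3 != 0 ->
  [/\ 0 < n, n2 + n3 < 0 & (n1 + n2) * (n1 + n3) != 0].
Proof.
rewrite /m1t /m1 /ind.
case: (0 < n); last by rewrite !(mulr0, mul0r) eqxx.
case: (n2 + n3 < 0); last by rewrite !(mulr0, mul0r) eqxx.
case: (n3 != 0); last by rewrite !(mulr0, mul0r) eqxx.
by case: ((n1 + n2) * (n1 + n3) != 0); rewrite ?(mulr0, mul0r) ?eqxx.
Qed.

Lemma PhiC23 n n1 n2 n3 : Phi n n1 n2 n3 = Phi n n1 n3 n2.
Proof. by rewrite /Phi; ring. Qed.

Lemma ler_norm_mul2 (R : numDomainType) (x : R) : `|x| <= `|2 * x|.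
Proof. by rewrite normrM ler_peMl // ger0_norm // ler1n. Qed.

Lemma Phi_mixed_signs n1 n2 n3 :
  0 <= n1 -> 0 <= n1 + n2 + n3 -> 0 <= n2 -> n3 <= 0 ->
  Phi (n1 + n2 + n3) n1 n2 n3 = 2 * ((n1 + n3) * (n2 + n3)).
Proof.
move=> n1_ge0 n_ge0 n2_ge0 n3_le0.
by rewrite /Phi (ger0_norm n_ge0) (ger0_norm n1_ge0) (ger0_norm n2_ge0) (ler0_norm n3_le0); ring.
Qed.

Lemma Phi_neg_signs n1 n2 n3 :
  0 <= n1 -> 0 <= n1 + n2 + n3 -> n2 <= 0 -> n3 <= 0 ->
  Phi (n1 + n2 + n3) n1 n2 n3 = 2 * ((n1 + n2 + n3) * (n2 + n3) - n2 * n3).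
Proof.
move=> n1_ge0 n_ge0 n2_le0 n3_le0.
by rewrite /Phi (ger0_norm n_ge0) (ger0_norm n1_ge0) (ler0_norm n2_le0) (ler0_norm n3_le0); ring.
Qed.

Lemma Phi_neg_signs_bound n1 n2 n3 :
  0 < n1 + n2 + n3 -> n2 < 0 -> n3 < 0 -> `|n3| <= `|n2| ->
  `|(n1 + n2) * (n2 + n3)| <= `|Phi (n1 + n2 + n3) n1 n2 n3|.
Proof.
move=> n_gt0 n2_lt0 n3_lt0.
rewrite (ltr0_norm n2_lt0) (ltr0_norm n3_lt0) => n32.
have n23_lt0 : n2 + n3 < 0 by lia.
have n12_gt0 : 0 < n1 + n2 by lia.
have n3n2 : 0 <= - n3 * (n3 - n2) by apply: mulr_ge0; lia.
rewrite Phi_neg_signs; [| lia..].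
rewrite normrM (gtr0_norm n12_gt0) (ltr0_norm n23_lt0) ler0_norm; nia.
Qed.

Lemma Phi_lower_bound n1 n2 n3 : 0 < n1 + n2 + n3 -> n2 + n3 < 0 ->
  if `|n3| <= `|n2|
  then `|(n1 + n2) * (n2 + n3)| <= `|Phi (n1 + n2 + n3) n1 n2 n3|
  else `|(n1 + n3) * (n2 + n3)| <= `|Phi (n1 + n2 + n3) n1 n2 n3|.
Proof.
move=> n_gt0 n23_lt0.
have n_ge0 := ltW n_gt0.
have n1_ge0 : 0 <= n1 by lia.
have [n2_ge0 | n2_lt0] := lerP 0 n2.
  have n32 : `|n2| < `|n3| by rewrite ger0_norm // ltr0_norm; lia.
  rewrite leNgt n32 /= Phi_mixed_signs; [exact: ler_norm_mul2 | lia..].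
have [n3_ge0 | n3_lt0] := lerP 0 n3.
  have -> : `|n3| <= `|n2| by rewrite ger0_norm // ltr0_norm; lia.
  rewrite PhiC23 addrAC Phi_mixed_signs; [by rewrite (addrC n3) ler_norm_mul2 | lia..].
case: ifPn => [n32 | ]; first exact: Phi_neg_signs_bound.
rewrite -ltNge => n23.
rewrite PhiC23 addrAC (addrC n2); apply: Phi_neg_signs_bound => //; last exact: ltW.
by rewrite addrAC.
Qed.

Theorem mainTheorem4 :
  (exists c : rat, 0 < c /\
    forall n n1 n2 n3 : int, n = n1 + n2 + n3 -> m1t n n1 n2 n3 != 0 ->
      if `|n3| <= `|n2|
      then c * `|(n1 + n2) * (n2 + n3)|%:~R <= `|Phi n n1 n2 n3|%:~R
      else c * `|(n1 + n3) * (n2 + n3)|%:~R <= `|Phi n n1 n2 n3|%:~R)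
  /\ (forall n n1 n2 n3 : int, n = n1 + n2 + n3 -> m1t n n1 n2 n3 != 0 ->
        Phi n n1 n2 n3 != 0).
Proof.
split.
  exists 1; split=> // n n1 n2 n3 -> /m1t_neq0 [n_gt0 n23_lt0 _].
  by have := Phi_lower_bound n1 n2 n3 n_gt0 n23_lt0; case: ifP => _; rewrite mul1r ler_int.
move=> n n1 n2 n3 -> /m1t_neq0 [n_gt0 n23_lt0].
rewrite mulf_eq0 negb_or => /andP [n12_neq0 n13_neq0].
have n23_neq0 : n2 + n3 != 0 by rewrite lt_eqF.
rewrite -normr_gt0; have := Phi_lower_bound n1 n2 n3 n_gt0 n23_lt0.
by case: ifP => _ bound; apply: (lt_le_trans _ bound); rewrite normr_gt0; apply: mulf_neq0.
Qed.
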